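(* In the social learning model, suppose the left tail of $G_-$ is convex and differentiable. Then there exists a positive integer $z$ such that for all $t\ge1$ and $s\ge1$: if $a_t=a_{t+1}=\cdots=a_{t+s-1}=+1$, then $\ell_{t+s}\ge \ell^*_{s-z}$.
   Context: Social learning model. A state $\theta\in\{-1,+1\}$ is drawn with $\mathbb{P}(\theta=+1)=\mathbb{P}(\theta=-1)=1/2$. Agents $t=1,2,\dots$ receive private signals $s_t\in\mathbb{R}$ that are i.i.d. conditionally on $\theta$, with CDF $F_+$ if $\theta=+1$ and $F_-$ if $\theta=-1$; $F_+$ and $F_-$ are mutually absolutely continuous. Let $L_t=\log\frac{\mathbb{P}(\theta=+1\mid s_t)}{\mathbb{P}(\theta=-1\mid s_t)}$ be the private log-likelihood ratio, and let $G_+$, $G_-$ denote the CDFs of $L_t$ conditional on $\theta=+1$, $\theta=-1$ respectively. Signals are assumed unbounded: for every $M\in\mathbb{R}$, $\mathbb{P}(L_t>M)>0$ and $\mathbb{P}(L_t<-M)>0$. Agent $t$ observes $a_1,\dots,a_{t-1}$ and her own signal and chooses $a_t\in\{-1,+1\}$ (utility $1$ if $a_t=\theta$, else $0$). The public belief is $\mu_t=\mathbb{P}(\theta=+1\mid a_1,\dots,a_{t-1})$ and $\ell_t=\log\frac{\mu_t}{1-\mu_t}$ (so $\ell_1=0$). In equilibrium $a_t=+1$ iff $\ell_t+L_t>0$, and otherwise $a_t=-1$. Consequently $\ell_{t+1}=\ell_t+D_+(\ell_t)$ if $a_t=+1$ and $\ell_{t+1}=\ell_t+D_-(\ell_t)$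 if $a_t=-1$, where $D_+(x)=\log\frac{1-G_+(-x)}{1-G_-(-x)}$ and $D_-(x)=\log\frac{G_+(-x)}{G_-(-x)}$. We write $\mathbb{P}_+(\cdot)=\mathbb{P}(\cdot\mid\theta=+1)$ and $\mathbb{E}_+$ for the corresponding expectation. ''The left tail of $G_-$ is convex and differentiable'' means: there exists $x_0\in\mathbb{R}$ such that the restriction of $G_-$ to $(-\infty,x_0)$ is convex and differentiable. $\ell^*_t$ denotes the value of $\ell_t$ on the event $a_1=\cdots=a_{t-1}=+1$, i.e., $\ell^*_1=0$ and $\ell^*_{t+1}=\ell^*_t+D_+(\ell^*_t)$; by convention $\ell^*_j=0$ for integers $j\le 1$. *)

From Stdlib Require Import Reals Lra Lia.
Open Scope R_scope.

Definition is_cdf (G : R -> R) : Prop :=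
  (forall x y, x <= y -> G x <= G y) /\
  (forall x, forall eps, eps > 0 -> exists delta, delta > 0 /\
       forall y, x <= y < x + delta -> G y - G x < eps) /\
  (forall eps, eps > 0 -> exists M, forall x, x <= - M -> G x < eps) /\
  (forall eps, eps > 0 -> exists M, forall x, x >= M -> 1 - G x < eps).

(** [Gp], [Gm] are the conditional CDFs (given theta=+1 / theta=-1) of the
    private log-likelihood ratio L = log (P(theta=+1|s)/P(theta=-1|s))
    (uniform prior): equivalently dGp(u) = e^u dGm(u), i.e. for every interval
    (a,b], the Gp-mass lies between e^a and e^b times the Gm-mass. *)
Definition llr_pair (Gp Gm : R -> R) : Prop :=
  forall a b, a < b ->
    exp a * (Gm b - Gm a) <= Gp b - Gp a /\
    Gp b - Gp a <= exp b * (Gm b - Gm a).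

(** Unbounded signals: for every M, P(L > M) > 0 and P(L < -M) > 0, where
    P = (P_+ + P_-)/2.  (P(L< -M)>0 for all M is equivalent to P(L <= -M)>0
    for all M.) *)
Definition unbounded_signals (Gp Gm : R -> R) : Prop :=
  forall M, ((1 - Gp M) + (1 - Gm M)) / 2 > 0 /\ (Gp (- M) + Gm (- M)) / 2 > 0.

Definition left_tail_convex_differentiable (G : R -> R) : Prop :=
  exists x0 : R,
    (forall x y lam, x < x0 -> y < x0 -> 0 <= lam <= 1 ->
       G (lam * x + (1 - lam) * y) <= lam * G x + (1 - lam) * G y) /\
    (forall x, x < x0 -> exists l, derivable_pt_lim G x l).

Definition Dplus (Gp Gm : R -> R) (x : R) : R :=
  ln ((1 - Gp (- x)) / (1 - Gm (- x))).
Definition Dminus (Gp Gm : R -> R) (x : R) : R :=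
  ln (Gp (- x) / Gm (- x)).

(** Action sequence: [a t = true] means a_t = +1, [false] means a_t = -1
    (index 0 unused; agents are t = 1, 2, ...).
    [ell_aux a n] is ell_{n+1}. *)
Fixpoint ell_aux (Gp Gm : R -> R) (a : nat -> bool) (n : nat) : R :=
  match n with
  | O => 0
  | S m => let l := ell_aux Gp Gm a m in
           l + (if a (S m) then Dplus Gp Gm l else Dminus Gp Gm l)
  end.

(** Public log-likelihood ratio ell_t (for t >= 1; ell_1 = 0). *)
Definition ell (Gp Gm : R -> R) (a : nat -> bool) (t : nat) : R :=
  ell_aux Gp Gm a (t - 1).

(** ell*_j : value of ell_j when all previous actions are +1;
    equals 0 for j <= 1 (for negative integer indices, pass 0 — natural
    subtraction truncates to 0, consistent with the convention ell*_j = 0). *)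
Definition ell_star (Gp Gm : R -> R) (j : nat) : R :=
  ell Gp Gm (fun _ => true) j.

From Stdlib Require Import Reals Lra Lia.
From Coquelicot Require Import Rcomplements.
Open Scope R_scope.

(* Along a run of +1 actions the public belief follows the iterates of
   F x = x + D_+(x).  Since dG_+ = e^u dG_-, F x >= max(x, 0); since G_- - G_+
   is bounded away from 0 on compacts, F gains a uniform amount on every
   [0, C]; and convexity of the left tail of G_- makes F monotone on some
   half-line [K, oo).  Let y >= K be reached from 0 in N steps.  From any
   start, one step lands in [0, oo) and a further fixed number of steps then
   exceeds y, say Q steps in total.  Hence F^m(0) <= F^(m+Q)(x) for m <= N,
   and monotonicity of F above K propagates this to all m. *)

Lemma exp_le_compat x y : x <= y -> exp x <= exp y.
Proof.
  intros [Hlt | ->]; [apply Rlt_le, exp_increasing, Hlt | apply Rle_refl].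
Qed.

Lemma ln_le_sub_1 y : 0 < y -> ln y <= y - 1.
Proof.
  intros Hy; rewrite <- (ln_exp (y - 1)).
  apply ln_le; [exact Hy |].
  pose proof (exp_ineq1_le (y - 1)); lra.
Qed.

Lemma cdf_le_1 (G H : R -> R) : is_cdf G -> is_cdf H ->
  (forall M, 0 < (1 - G M) + (1 - H M)) -> forall x, G x <= 1.
Proof.
  intros [G_mono _] [_ [_ [_ H_top]]] Hpos x.
  destruct (Rle_lt_dec (G x) 1) as [Hle | Hgt]; [exact Hle |].
  destruct (H_top (G x - 1)) as [M HM]; [lra |].
  pose proof (G_mono x (Rmax x M) (Rmax_l x M)).
  pose proof (HM (Rmax x M) (Rle_ge _ _ (Rmax_r x M))).
  pose proof (Hpos (Rmax x M)); lra.
Qed.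

Lemma cdf_ge_0 (G H : R -> R) : is_cdf G -> is_cdf H ->
  (forall M, 0 < G M + H M) -> forall x, 0 <= G x.
Proof.
  intros [G_mono _] [_ [_ [H_bot _]]] Hpos x.
  destruct (Rle_lt_dec 0 (G x)) as [Hle | Hlt]; [exact Hle |].
  destruct (H_bot (- G x)) as [M HM]; [lra |].
  pose proof (G_mono (Rmin x (- M)) x (Rmin_l x (- M))).
  pose proof (HM (Rmin x (- M)) (Rmin_r x (- M))).
  pose proof (Hpos (Rmin x (- M))); lra.
Qed.

Lemma convex_chord_slope (G : R -> R) x0 u' u w :
  (forall x y lam, x < x0 -> y < x0 -> 0 <= lam <= 1 ->
     G (lam * x + (1 - lam) * y) <= lam * G x + (1 - lam) * G y) ->
  u' < u -> u < w -> w < x0 ->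
  (w - u) * (G u - G u') <= (u - u') * (G w - G u).
Proof.
  intros Hconv Hu'u Huw Hwx0.
  set (lam := (w - u) / (w - u')).
  assert (Hlam : lam * (w - u') = w - u) by (unfold lam; field; lra).
  assert (Hmid : lam * u' + (1 - lam) * w = u) by (unfold lam; field; lra).
  assert (Hc : G u <= lam * G u' + (1 - lam) * G w).
  { rewrite <- Hmid at 1; apply Hconv; nra. }
  assert (Hc' : (w - u') * G u <= (w - u) * G u' + (u - u') * G w).
  { replace ((w - u) * G u' + (u - u') * G w)
      with ((w - u') * (lam * G u' + (1 - lam) * G w)) by (unfold lam; field; lra).
    apply Rmult_le_compat_l; lra. }
  nra.
Qed.

Definition update_plus (Gp Gm : R -> R) (x : R) : R := x + Dplus Gp Gm x.

Lemma ell_aux_iter Gp Gm (a : nat -> bool) n j :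
  (forall k, (n < k <= n + j)%nat -> a k = true) ->
  ell_aux Gp Gm a (n + j) = Nat.iter j (update_plus Gp Gm) (ell_aux Gp Gm a n).
Proof.
  induction j as [| j IH]; intros Ha.
  - rewrite Nat.add_0_r; reflexivity.
  - rewrite Nat.add_succ_r, Nat.iter_succ; simpl ell_aux.
    rewrite Ha by lia; rewrite IH by (intros k Hk; apply Ha; lia).
    reflexivity.
Qed.

Section LikelihoodRatioCdfs.

Variables Gp Gm : R -> R.
Hypotheses (HGp : is_cdf Gp) (HGm : is_cdf Gm)
  (Hllr : llr_pair Gp Gm) (Hunb : unbounded_signals Gp Gm).

Lemma Gp_le_1 x : Gp x <= 1.
Proof. apply (cdf_le_1 Gp Gm HGp HGm); intros M; destruct (Hunb M); lra. Qed.

Lemma Gm_le_1 x : Gm x <= 1.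
Proof. apply (cdf_le_1 Gm Gp HGm HGp); intros M; destruct (Hunb M); lra. Qed.

Lemma Gm_ge_0 x : 0 <= Gm x.
Proof.
  apply (cdf_ge_0 Gm Gp HGm HGp); intros M.
  destruct (Hunb (- M)) as [_ Hpos]; rewrite Ropp_involutive in Hpos; lra.
Qed.

Lemma llr_upper_tail u : exp u * (1 - Gm u) <= 1 - Gp u.
Proof.
  apply Rle_plus_epsilon; intros eps Heps.
  pose proof (exp_pos u) as Heu.
  destruct HGm as [_ [_ [_ Gm_top]]].
  destruct (Gm_top (eps / exp u)) as [M HM]; [apply Rdiv_lt_0_compat; lra |].
  set (b := Rmax (u + 1) M).
  destruct (Hllr u b) as [Hlow _]; [pose proof (Rmax_l (u + 1) M); unfold b; lra |].
  assert (exp u * (1 - Gm b) <= eps).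
  { rewrite Rmult_comm; apply Rle_div_r; [exact Heu |].
    apply Rlt_le, HM, Rle_ge, Rmax_r. }
  pose proof (Gp_le_1 b); lra.
Qed.

Lemma llr_lower_tail u : Gp u <= exp u * Gm u.
Proof.
  apply Rle_plus_epsilon; intros eps Heps.
  destruct HGp as [_ [_ [Gp_bot _]]].
  destruct (Gp_bot eps Heps) as [M HM].
  set (a := Rmin (u - 1) (- M)).
  destruct (Hllr a u) as [_ Hup]; [pose proof (Rmin_l (u - 1) (- M)); unfold a; lra |].
  pose proof (HM a (Rmin_r _ _)); pose proof (Gm_ge_0 a); pose proof (exp_pos u).
  nra.
Qed.

Lemma Gp_le_Gm u : Gp u <= Gm u.
Proof.
  destruct (Rle_lt_dec u 0) as [Hu | Hu].
  - assert (exp u <= 1) by (rewrite <- exp_0; apply exp_le_compat, Hu).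
    pose proof (llr_lower_tail u); pose proof (Gm_ge_0 u); nra.
  - assert (1 <= exp u) by (rewrite <- exp_0; apply exp_le_compat; lra).
    pose proof (llr_upper_tail u); pose proof (Gm_le_1 u); nra.
Qed.

Lemma Gm_lt_1 u : Gm u < 1.
Proof.
  destruct (Rlt_le_dec (Gm u) 1) as [Hlt | Hge]; [exact Hlt | exfalso].
  assert (Gp_flat : forall b, u < b -> Gp b <= Gp u).
  { intros b Hub; destruct (Hllr u b Hub) as [_ Hup].
    pose proof (Gm_le_1 b); pose proof (exp_pos b); nra. }
  assert (1 <= Gp u).
  { apply Rle_plus_epsilon; intros eps Heps.
    destruct HGp as [_ [_ [_ Gp_top]]].
    destruct (Gp_top eps Heps) as [M HM].
    pose proof (Gp_flat (Rmax (u + 1) M) ltac:(pose proof (Rmax_l (u + 1) M); lra)).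
    pose proof (HM (Rmax (u + 1) M) (Rle_ge _ _ (Rmax_r _ _))); lra. }
  destruct (Hunb u); lra.
Qed.

Lemma Gp_lt_1 u : Gp u < 1.
Proof.
  pose proof (llr_upper_tail u); pose proof (Gm_lt_1 u); pose proof (exp_pos u).
  nra.
Qed.

Lemma Gm_pos u : 0 < Gm u.
Proof.
  destruct (Hunb (- u)) as [_ Hpos]; rewrite Ropp_involutive in Hpos.
  pose proof (llr_lower_tail u); pose proof (Gm_ge_0 u); pose proof (exp_pos u).
  nra.
Qed.

Lemma Gm_sub_Gp_uniform C :
  exists eta, 0 < eta /\ forall u, - C <= u <= 0 -> eta <= Gm u - Gp u.
Proof.
  set (w := - C - 1).
  exists ((exp (- C) - exp w) * Gm w); split.
  - apply Rmult_lt_0_compat; [| apply Gm_pos].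
    pose proof (exp_increasing w (- C) ltac:(unfold w; lra)); lra.
  - intros u Hu.
    destruct (Hllr w u ltac:(unfold w; lra)) as [_ Hup].
    assert (exp u <= 1) by (rewrite <- exp_0; apply exp_le_compat; lra).
    assert (exp (- C) <= exp u) by (apply exp_le_compat; lra).
    pose proof (llr_lower_tail w); pose proof (Gm_ge_0 u); pose proof (Gm_ge_0 w).
    nra.
Qed.

Lemma Dplus_ge_ln c x :
  0 < c -> c * (1 - Gm (- x)) <= 1 - Gp (- x) -> ln c <= Dplus Gp Gm x.
Proof.
  intros Hc Hcx; unfold Dplus; apply ln_le; [exact Hc |].
  apply Rle_div_r; [pose proof (Gm_lt_1 (- x)); lra | exact Hcx].
Qed.

Lemma update_plus_ge_0 x : 0 <= update_plus Gp Gm x.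
Proof.
  pose proof (Dplus_ge_ln (exp (- x)) x (exp_pos _) (llr_upper_tail (- x))).
  rewrite ln_exp in *; unfold update_plus; lra.
Qed.

Lemma update_plus_ge_id x : x <= update_plus Gp Gm x.
Proof.
  assert (H1 : 1 * (1 - Gm (- x)) <= 1 - Gp (- x)) by (pose proof (Gp_le_Gm (- x)); lra).
  pose proof (Dplus_ge_ln 1 x Rlt_0_1 H1).
  rewrite ln_1 in *; unfold update_plus; lra.
Qed.

Lemma update_plus_uniform_gain C :
  exists d, 0 < d /\ forall x, 0 <= x <= C -> x + d <= update_plus Gp Gm x.
Proof.
  destruct (Gm_sub_Gp_uniform C) as [eta [Heta Hgap]].
  exists (ln (1 + eta)); split.
  - rewrite <- ln_1; apply ln_increasing; lra.
  - intros x Hx; unfold update_plus.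
    enough (ln (1 + eta) <= Dplus Gp Gm x) by lra.
    apply Dplus_ge_ln; [lra |].
    pose proof (Hgap (- x) ltac:(lra)); pose proof (Gm_ge_0 (- x)); nra.
Qed.

Lemma Gm_increment_le x0 u' u w :
  (forall x y lam, x < x0 -> y < x0 -> 0 <= lam <= 1 ->
     Gm (lam * x + (1 - lam) * y) <= lam * Gm x + (1 - lam) * Gm y) ->
  u' <= u -> u + 1 <= w -> w < x0 ->
  Gm u - Gm u' <= (u - u') * (1 - Gm u).
Proof.
  intros Hconv [Hlt | ->] Huw Hwx0; [| lra].
  pose proof (convex_chord_slope Gm x0 u' u w Hconv Hlt ltac:(lra) Hwx0).
  assert (Hslope : 0 <= (u - u') * (1 - Gm u)) by (pose proof (Gm_le_1 u); nra).
  assert ((u - u') * (Gm w - Gm u) <= (u - u') * (1 - Gm u))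
    by (pose proof (Gm_le_1 w); apply Rmult_le_compat_l; lra).
  apply (Rmult_le_reg_l (w - u)); [lra |]; nra.
Qed.

Lemma update_plus_monotone_tail x0 :
  (forall x y lam, x < x0 -> y < x0 -> 0 <= lam <= 1 ->
     Gm (lam * x + (1 - lam) * y) <= lam * Gm x + (1 - lam) * Gm y) ->
  exists K, forall x x', K <= x -> x <= x' -> update_plus Gp Gm x <= update_plus Gp Gm x'.
Proof.
  intros Hconv; exists (2 - x0); intros x x' Hx Hxx'.
  pose proof (Gm_lt_1 (- x)); pose proof (Gm_lt_1 (- x')).
  pose proof (Gp_lt_1 (- x)); pose proof (Gp_lt_1 (- x')).
  assert (Gp_term : ln (1 - Gp (- x)) <= ln (1 - Gp (- x'))).
  { apply ln_le; [lra |].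
    destruct HGp as [Gp_mono _]; pose proof (Gp_mono (- x') (- x) ltac:(lra)); lra. }
  assert (Gm_term : ln (1 - Gm (- x')) - ln (1 - Gm (- x)) <= x' - x).
  { rewrite <- ln_div by lra.
    eapply Rle_trans; [apply ln_le_sub_1, Rdiv_lt_0_compat; lra |].
    enough ((1 - Gm (- x')) / (1 - Gm (- x)) <= 1 + (x' - x)) by lra.
    apply Rle_div_l; [lra |].
    pose proof (Gm_increment_le x0 (- x') (- x) (x0 - 1) Hconv ltac:(lra) ltac:(lra) ltac:(lra)).
    lra. }
  unfold update_plus, Dplus; rewrite !ln_div by lra; lra.
Qed.

End LikelihoodRatioCdfs.

Section InflationaryIteration.

Variable f : R -> R.
Hypotheses (f_ge_id : forall x, x <= f x) (f_ge_0 : forall x, 0 <= f x).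

Lemma iter_le_iter m n v : (m <= n)%nat -> Nat.iter m f v <= Nat.iter n f v.
Proof.
  induction 1 as [| n _ IH]; [apply Rle_refl |].
  rewrite Nat.iter_succ; eapply Rle_trans; [exact IH | apply f_ge_id].
Qed.

Lemma iter_ge_0 n v : (1 <= n)%nat -> 0 <= Nat.iter n f v.
Proof. destruct n as [| n]; [lia |]; intros _; rewrite Nat.iter_succ; apply f_ge_0. Qed.

Lemma iter_reaches C d : 0 < d -> (forall x, 0 <= x <= C -> x + d <= f x) ->
  exists n, forall v, 0 <= v -> C <= Nat.iter n f v.
Proof.
  intros Hd Hgain.
  destruct (INR_archimed d C Hd) as [n Hn]; exists n; intros v Hv.
  assert (Hgrowth : forall k, C <= Nat.iter k f v \/ INR k * d <= Nat.iter k f v).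
  { induction k as [| k IH]; [right; simpl; lra |].
    pose proof (iter_le_iter 0 k v ltac:(lia)) as Hpos; simpl in Hpos.
    rewrite Nat.iter_succ, S_INR.
    destruct (Rle_lt_dec C (Nat.iter k f v)) as [HC | HC].
    - left; pose proof (f_ge_id (Nat.iter k f v)); lra.
    - right; destruct IH as [IH | IH]; [lra |].
      pose proof (Hgain (Nat.iter k f v) ltac:(lra)); lra. }
  destruct (Hgrowth n); lra.
Qed.

Lemma iter_lag K :
  (forall C, exists d, 0 < d /\ forall x, 0 <= x <= C -> x + d <= f x) ->
  (forall x x', K <= x -> x <= x' -> f x <= f x') ->
  exists Q, (1 <= Q)%nat /\ forall x0 m, Nat.iter m f 0 <= Nat.iter (m + Q) f x0.
Proof.
  intros Hgain Hmono.
  destruct (Hgain K) as [d [Hd HdK]].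
  destruct (iter_reaches K d Hd HdK) as [N HN].
  set (y := Nat.iter N f 0).
  assert (HKy : K <= y) by (apply HN, Rle_refl).
  destruct (Hgain y) as [d' [Hd' Hd'y]].
  destruct (iter_reaches y d' Hd' Hd'y) as [P HP].
  exists (S P); split; [lia |]; intros x0 m.
  assert (Hy : forall n, (S P <= n)%nat -> y <= Nat.iter n f x0).
  { intros n Hn; eapply Rle_trans; [| apply (iter_le_iter _ _ _ Hn)].
    rewrite Nat.iter_succ_r; apply HP, f_ge_0. }
  induction m as [| m IH]; [apply iter_ge_0; lia |].
  destruct (Nat.le_gt_cases N m) as [HNm | HmN].
  - simpl Nat.add; rewrite !Nat.iter_succ; apply Hmono; [| exact IH].
    pose proof (iter_le_iter N m 0 HNm) as HyN; fold y in HyN; lra.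
  - eapply Rle_trans; [apply (iter_le_iter (S m) N 0); lia |].
    apply Hy; lia.
Qed.

End InflationaryIteration.

Theorem lemma8 (Gp Gm : R -> R)
  (HGp : is_cdf Gp) (HGm : is_cdf Gm)
  (Hllr : llr_pair Gp Gm)
  (Hunb : unbounded_signals Gp Gm)
  (Htail : left_tail_convex_differentiable Gm) :
  exists z : nat, (1 <= z)%nat /\
    forall (a : nat -> bool) (t s : nat),
      (1 <= t)%nat -> (1 <= s)%nat ->
      (forall k : nat, (t <= k <= t + s - 1)%nat -> a k = true) ->
      ell_star Gp Gm (s - z) <= ell Gp Gm a (t + s).
Proof.
  destruct Htail as [x0 [Hconv _]].
  destruct (update_plus_monotone_tail Gp Gm HGp HGm Hllr Hunb x0 Hconv) as [K HK].
  destruct (iter_lag (update_plus Gp Gm) (update_plus_ge_id Gp Gm HGp HGm Hllr Hunb)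
              (update_plus_ge_0 Gp Gm HGp HGm Hllr Hunb) K
              (update_plus_uniform_gain Gp Gm HGp HGm Hllr Hunb) HK) as [z [Hz Hlag]].
  exists z; split; [exact Hz |]; intros a t s Ht Hs Ha.
  unfold ell_star, ell.
  rewrite <- (Nat.add_0_l (s - z - 1)), ell_aux_iter by reflexivity.
  replace (t + s - 1)%nat with (t - 1 + s)%nat by lia.
  rewrite ell_aux_iter by (intros k Hk; apply Ha; lia).
  destruct (Nat.le_gt_cases s z) as [Hsz | Hsz].
  - replace (s - z - 1)%nat with 0%nat by lia.
    apply iter_ge_0; [apply update_plus_ge_0; assumption | exact Hs].
  - eapply Rle_trans; [apply Hlag |].
    apply iter_le_iter; [apply update_plus_ge_id; assumption | lia].
Qed.
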